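(* Let $L$ be a finite $\mathcal{L}$-lattice and let $V(\mathcal{L})\subseteq L$ be the set of values of closed formulas, i.e. of formulas containing no variables. (1) If $V(\mathcal{L})=\emptyset$, then $L$ does not have the interpolation property. (2) If $V(\mathcal{L})=L$, then $L$ has the interpolation property.
   Context: A lattice-oriented signature $\mathcal{L}$ is a finite set of connectives. Each connective $c$ has an arity $n_c\in\mathbb{N}$ and a polarity $p_c:\{1,\dots,n_c\}\to\{-,+\}$. The signature contains binary connectives $\lor,\land,\to$ with $p_\lor(1)=p_\lor(2)=p_\land(1)=p_\land(2)=+$, $p_\to(1)=-$ and $p_\to(2)=+$; nullary connectives are truth constants. A finite $\mathcal{L}$-lattice is a finite set $L$ together with an $n_c$-ary operation $c^L$ on $L$ for each connective $c$, such that: - $(L,\lor^L,\land^L)$ is a lattice, with order $x\le y$ iff $x\land y=x$; its top element is denoted $1$; - $c^L$ is monotone in every argument $i$ with $p_c(i)=+$ and antitone in every argument $i$ with $p_c(i)=-$; - for all $a,b\in L$: $1\le a\to^L b$ iff $a\le b$. Formulas (words) are built from propositional variables using the connectives. A valuation assigns elements of $L$ to the variables and extends to all formulas via the operations $c^L$. For formulas $a,b$, ''$a\le b$ is valid'' means that the value of $a$ is $\le$ the value of $b$ under every valuation. For a valid $a\le b$, the variables occurring only in $a$ are the left variables, those occurring only in $b$ are the right variables, and those occurring in both are the intersection variables. $L$ has the interpolation property iff for all formulas $a,b$ with $a\le b$ valid there is a formula $i$ whose variables are all intersection variables of $a,b$ such that $a\le i$ and $i\le b$ are valid. If there are no intersection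 variables, $i$ must be a closed formula. *)

From mathcomp Require Import all_boot.
Set Implicit Arguments. Unset Strict Implicit. Unset Printing Implicit Defensive.

(* A signature: a finite type C of connectives, each with an arity and a
   polarity (true = +, false = -). *)
Section Lattices.
Variable C : finType.
Variable ar : C -> nat.

Inductive form : Type :=
| Var of nat
| Op (c : C) of {ffun 'I_(ar c) -> form}.

Fixpoint occurs (n : nat) (t : form) : bool :=
  match t with
  | Var m => m == n
  | Op c f => [exists i, occurs n (f i)]
  end.

Definition closed_form (t : form) : Prop := forall n, ~~ occurs n t.

Variable L : finType.
Variable interp : forall c : C, {ffun 'I_(ar c) -> L} -> L.

Fixpoint eval (v : nat -> L) (t : form) : L :=
  match t with
  | Var n => v n
  | Op c f => interp [ffun i => eval v (f i)]
  end.

(* binary application of a connective (meaningful when ar c = 2):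
   argument 0 is x, argument 1 is y *)
Definition app2 (c : C) (x y : L) : L :=
  interp [ffun i : 'I_(ar c) => if nat_of_ord i == 0 then x else y].

Variables cor cand cimp : C.
Definition ljoin := app2 cor.
Definition lmeet := app2 cand.
Definition lle (x y : L) : Prop := lmeet x y = x.

Definition is_lattice : Prop :=
  [/\ (forall x y, ljoin x y = ljoin y x) /\
      (forall x y, lmeet x y = lmeet y x),
      (forall x y z, ljoin x (ljoin y z) = ljoin (ljoin x y) z),
      (forall x y z, lmeet x (lmeet y z) = lmeet (lmeet x y) z),
      (forall x y, ljoin x (lmeet x y) = x) &
      (forall x y, lmeet x (ljoin x y) = x)].

Definition is_top (t : L) : Prop := forall x, lle x t.

Variable pol : forall c : C, 'I_(ar c) -> bool.

Definition respects_polarity : Prop :=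
  forall (c : C) (i : 'I_(ar c)) (f g : {ffun 'I_(ar c) -> L}),
    (forall j, j != i -> f j = g j) -> lle (f i) (g i) ->
    if pol i then lle (interp f) (interp g) else lle (interp g) (interp f).

Definition is_L_lattice : Prop :=
  [/\ is_lattice,
      (exists t, is_top t),
      respects_polarity &
      (forall t, is_top t -> forall a b, lle t (app2 cimp a b) <-> lle a b)].

Definition valid (a b : form) : Prop := forall v, lle (eval v a) (eval v b).

Definition interpolation_property : Prop :=
  forall a b : form, valid a b ->
    exists i : form,
      (forall n, occurs n i -> occurs n a && occurs n b) /\
      valid a i /\ valid i b.

Definition closed_value (x : L) : Prop :=
  exists t : form, closed_form t /\ forall v, eval v t = x.

End Lattices.

(** If every element of [L] is the value of a closed formula, the variables of
    [a] that do not occur in [b] can be eliminated one at a time: replacing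
    [X] by the join, over all [x : L], of [X] with a closed formula of value
    [x] substituted for the variable is the least upper bound of [X] over all
    values of that variable, i.e. an existential quantifier.  Eliminating all
    left variables of [a] yields an interpolant.  Conversely, [x0 <= x1 -> x1]
    is valid, and an interpolant would have no variables at all, so its value
    would be the value of a closed formula. *)

From mathcomp Require Import all_boot.
Set Implicit Arguments. Unset Strict Implicit. Unset Printing Implicit Defensive.

Section Formulas.
Variables (C : finType) (ar : C -> nat).

(* The generated [form_rect] gives no induction hypothesis for the subformulas
   of [Op c f], which sit under a finite function. *)
Fixpoint form_nested_rect (P : form ar -> Type)
  (HV : forall n, P (Var ar n))
  (HO : forall c (f : {ffun 'I_(ar c) -> form ar}), (forall i, P (f i)) -> P (Op f))
  (t : form ar) : P t :=
  match t with
  | Var n => HV n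
  | Op c f => HO c f (fun i => form_nested_rect HV HO (f i))
  end.

Fixpoint subst (n : nat) (s t : form ar) : form ar :=
  match t with
  | Var m => if m == n then s else Var ar m
  | Op c f => Op [ffun i => subst n s (f i)]
  end.

Fixpoint var_bound (t : form ar) : nat :=
  match t with
  | Var m => m.+1
  | Op c f => \max_i var_bound (f i)
  end.

Definition app2_form (c : C) (t1 t2 : form ar) : form ar :=
  Op [ffun i : 'I_(ar c) => if nat_of_ord i == 0 then t1 else t2].

Lemma occurs_var_bound (t : form ar) m : occurs m t -> m < var_bound t.
Proof.
elim/form_nested_rect: t => [n|c f IH] /=; first by move/eqP->.
by case/existsP => i /IH lt_m; apply: leq_trans lt_m (leq_bigmax i).
Qed.

Lemma occurs_subst n (s t : form ar) m :
  occurs m (subst n s t) -> (occurs m t && (m != n)) || occurs m s.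
Proof.
elim/form_nested_rect: t => [k|c f IH] /=.
  by case: eqP => [-> ->|/eqP neq_kn /eqP <-]; rewrite ?orbT // eqxx neq_kn.
case/existsP => i; rewrite ffunE => /IH /orP [/andP [occ_fi ->]|->]; last by rewrite orbT.
by rewrite andbT; apply/orP; left; apply/existsP; exists i.
Qed.

Lemma occurs_app2_form c (t1 t2 : form ar) m :
  occurs m (app2_form c t1 t2) -> occurs m t1 || occurs m t2.
Proof. by case/existsP => i; rewrite ffunE; case: ifP => _ occ_m; apply/orP; [left|right]. Qed.

Variables (L : finType) (interp : forall c : C, {ffun 'I_(ar c) -> L} -> L).

Definition set_var (v : nat -> L) (n : nat) (x : L) : nat -> L :=
  fun m => if m == n then x else v m.

Lemma eq_eval (t : form ar) (v w : nat -> L) :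
  (forall m, occurs m t -> v m = w m) -> eval interp v t = eval interp w t.
Proof.
elim/form_nested_rect: t v w => [n|c f IH] v w eq_vw /=.
  by apply: eq_vw; rewrite /= eqxx.
congr interp; apply/ffunP => i; rewrite !ffunE; apply: IH => m occ_m.
by apply: eq_vw; apply/existsP; exists i.
Qed.

Lemma eval_set_var_id (t : form ar) (v : nat -> L) n :
  eval interp (set_var v n (v n)) t = eval interp v t.
Proof. by apply: eq_eval => m _; rewrite /set_var; case: eqP => // ->. Qed.

Lemma eval_subst n (s t : form ar) (v : nat -> L) :
  eval interp v (subst n s t) = eval interp (set_var v n (eval interp v s)) t.
Proof.
elim/form_nested_rect: t => [m|c f IH] /=; first by rewrite /set_var; case: (m == n).
by congr interp; apply/ffunP => i; rewrite !ffunE IH.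
Qed.

Lemma eval_app2_form c (t1 t2 : form ar) (v : nat -> L) :
  eval interp v (app2_form c t1 t2) = app2 interp c (eval interp v t1) (eval interp v t2).
Proof. by congr interp; apply/ffunP => i; rewrite !ffunE; case: ifP. Qed.

Lemma closed_form_value (t : form ar) (x : L) :
  closed_form t -> closed_value interp (eval interp (fun=> x) t).
Proof.
move=> closed_t; exists t; split=> // v.
by apply: eq_eval => m; rewrite (negPf (closed_t m)).
Qed.

Section Order.
Variables cor cand : C.
Hypothesis lattice : is_lattice interp cor cand.

Local Notation "x <=L y" := (lle interp cand x y) (at level 70).
Local Notation join := (ljoin interp cor).

Lemma lle_refl (x : L) : x <=L x.
Proof. by case: lattice => _ _ _ joinK meetK; rewrite /lle -{2}(joinK x x) meetK. Qed.

Lemma lle_trans (y x z : L) : x <=L y -> y <=L z -> x <=L z.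
Proof. by case: lattice => _ _ meetA _ _ le_xy le_yz; rewrite /lle -le_xy -meetA le_yz. Qed.

Lemma lle_joinl (x y : L) : x <=L join x y.
Proof. by case: lattice => _ _ _ _ meetK; exact: meetK. Qed.

Lemma lle_joinr (x y : L) : y <=L join x y.
Proof. by case: lattice => [[joinC _]] _ _ _ meetK; rewrite joinC; exact: meetK. Qed.

Lemma lle_join (x y z : L) : x <=L z -> y <=L z -> join x y <=L z.
Proof.
case: lattice => [[joinC meetC]] joinA _ joinK meetK.
have join_eq (a b : L) : a <=L b -> join a b = b by move=> <-; rewrite joinC meetC joinK.
move=> /join_eq le_xz /join_eq le_yz.
by rewrite /lle -le_xz -le_yz joinA meetK.
Qed.

Definition join_forms (I : Type) (t : form ar) (F : I -> form ar) (xs : seq I) : form ar :=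
  foldr (fun x acc => app2_form cor (F x) acc) t xs.

Lemma join_forms_cons (I : Type) t (F : I -> form ar) x xs :
  join_forms t F (x :: xs) = app2_form cor (F x) (join_forms t F xs).
Proof. by []. Qed.

Lemma occurs_join_forms (I : Type) t (F : I -> form ar) xs m :
  occurs m (join_forms t F xs) -> occurs m t || has (fun x => occurs m (F x)) xs.
Proof.
elim: xs => [->//|x xs IH]; rewrite join_forms_cons /=.
case/occurs_app2_form/orP => [occ_x|/IH /orP [->//|occ_xs]]; by rewrite ?occ_x ?occ_xs !orbT.
Qed.

Lemma le_join_forms (I : eqType) t (F : I -> form ar) xs x v :
  x \in xs -> eval interp v (F x) <=L eval interp v (join_forms t F xs).
Proof.
elim: xs => [//|y xs IH]; rewrite inE join_forms_cons eval_app2_form.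
case/orP => [/eqP ->|/IH le_x]; first exact: lle_joinl.
exact: (lle_trans le_x (lle_joinr _ _)).
Qed.

Lemma join_forms_le (I : Type) t (F : I -> form ar) xs v y :
  eval interp v t <=L y -> (forall x, eval interp v (F x) <=L y) ->
  eval interp v (join_forms t F xs) <=L y.
Proof.
move=> le_t le_F; elim: xs => [//|x xs IH].
by rewrite join_forms_cons eval_app2_form; apply: lle_join.
Qed.

End Order.
End Formulas.

Section Elimination.
Variables (C : finType) (ar : C -> nat) (L : finType).
Variables (interp : forall c : C, {ffun 'I_(ar c) -> L} -> L) (cor cand : C).
Hypothesis lattice : is_lattice interp cor cand.
Variable K : L -> form ar.
Hypothesis K_closed : forall x, closed_form (K x).
Hypothesis eval_K : forall v x, eval interp v (K x) = x.
Variable x0 : L.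

Local Notation "x <=L y" := (lle interp cand x y) (at level 70).
Local Notation eval := (eval interp).

(* The join of [X[K x / n]] over all [x : L]; [x0] only makes the join nonempty. *)
Definition exists_form (n : nat) (X : form ar) : form ar :=
  join_forms cor (subst n (K x0) X) (fun x => subst n (K x) X) (enum L).

Definition exists_forms (l : seq nat) (X : form ar) : form ar := foldr exists_form X l.

Lemma eval_subst_K n x X v : eval v (subst n (K x) X) = eval (set_var v n x) X.
Proof. by rewrite eval_subst eval_K. Qed.

Lemma le_exists_form n X v x : eval (set_var v n x) X <=L eval v (exists_form n X).
Proof.
by rewrite -eval_subst_K; apply: le_join_forms; rewrite ?mem_enum.
Qed.

Lemma exists_form_le n X v y :
  (forall x, eval (set_var v n x) X <=L y) -> eval v (exists_form n X) <=L y.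
Proof.
by move=> le_y; apply: (join_forms_le lattice) => [|x]; rewrite eval_subst_K.
Qed.

Lemma occurs_exists_form n X m : occurs m (exists_form n X) -> occurs m X && (m != n).
Proof.
have occ_subst x : occurs m (subst n (K x) X) -> occurs m X && (m != n).
  by case/occurs_subst/orP => // occ_K; case/negP: (K_closed x m).
by case/occurs_join_forms/orP => [/occ_subst|/hasP [x _ /occ_subst]].
Qed.

Lemma occurs_exists_forms l X m : occurs m (exists_forms l X) -> occurs m X && (m \notin l).
Proof.
elim: l => [|n l IH] /=; first by rewrite andbT.
case/occurs_exists_form/andP => /IH /andP [-> notin_l] neq_mn.
by rewrite inE negb_or neq_mn.
Qed.

Lemma le_exists_forms l X v : eval v X <=L eval v (exists_forms l X).
Proof.
elim: l v => [|n l IH] v /=; first exact: (lle_refl lattice _).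
rewrite -{1}(eval_set_var_id interp X v n).
exact: (lle_trans lattice (IH _) (le_exists_form _ _ _ _)).
Qed.

Lemma exists_forms_le l X v y :
  (forall w, (forall m, m \notin l -> w m = v m) -> eval w X <=L y) ->
  eval v (exists_forms l X) <=L y.
Proof.
elim: l v => [|n l IH] v le_y /=; first exact: le_y.
apply: exists_form_le => x; apply: IH => w eq_w; apply: le_y => m.
by rewrite inE negb_or => /andP [neq_mn notin_l]; rewrite eq_w // /set_var (negPf neq_mn).
Qed.

Lemma interpolation_by_elimination : interpolation_property interp cand.
Proof.
move=> a b valid_ab.
pose left_vars := [seq m <- iota 0 (var_bound a) | ~~ occurs m b].
exists (exists_forms left_vars a); split; [|split].
- move=> m /occurs_exists_forms /andP [occ_a]; rewrite occ_a.
  by rewrite mem_filter mem_iota /= (occurs_var_bound occ_a) andbT negbK.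
- by move=> v; apply: le_exists_forms.
- move=> v; apply: exists_forms_le => w eq_wv.
  rewrite (@eq_eval _ _ _ _ b v w) => [|m occ_b]; first exact: valid_ab.
  by rewrite eq_wv // mem_filter occ_b.
Qed.

End Elimination.

Lemma interpolation_of_closed_values (C : finType) (ar : C -> nat) (L : finType)
    (interp : forall c : C, {ffun 'I_(ar c) -> L} -> L) (cor cand : C) (x0 : L) :
  is_lattice interp cor cand -> (forall x : L, closed_value interp x) ->
  interpolation_property interp cand.
Proof.
move=> lattice all_closed.
have [K HK] := fin_all_exists all_closed.
exact: (interpolation_by_elimination lattice (fun x => proj1 (HK x))
          (fun v x => proj2 (HK x) v) x0).
Qed.

Lemma no_interpolation_without_closed_values (C : finType) (ar : C -> nat)
    (pol : forall c : C, 'I_(ar c) -> bool) (cor cand cimp : C) (L : finType)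
    (interp : forall c : C, {ffun 'I_(ar c) -> L} -> L) :
  is_L_lattice interp cor cand cimp pol -> (forall x : L, ~ closed_value interp x) ->
  ~ interpolation_property interp cand.
Proof.
case=> lattice [top is_top_top] _ imp_top no_closed interpolation.
pose b := app2_form cimp (Var ar 1) (Var ar 1).
have valid_b : valid interp cand (Var ar 0) b.
  move=> v; apply: (lle_trans lattice (is_top_top _)); rewrite eval_app2_form.
  by apply/imp_top => //; exact: (lle_refl lattice _).
have [i [occ_i _]] := interpolation _ _ valid_b.
apply: (no_closed (eval interp (fun=> top) i)); apply: closed_form_value => m.
by apply/negP => /occ_i /andP [/eqP <- /occurs_app2_form]; rewrite orbb.
Qed.

Theorem mainTheorem2
  (C : finType) (ar : C -> nat) (pol : forall c : C, 'I_(ar c) -> bool)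
  (cor cand cimp : C)
  (ar_or : ar cor = 2) (ar_and : ar cand = 2) (ar_imp : ar cimp = 2)
  (pol_or : forall i, pol cor i = true)
  (pol_and : forall i, pol cand i = true)
  (pol_imp : forall i : 'I_(ar cimp), pol cimp i = (nat_of_ord i == 1))
  (L : finType) (interp : forall c : C, {ffun 'I_(ar c) -> L} -> L)
  (HL : is_L_lattice interp cor cand cimp pol) :
  ((forall x : L, ~ closed_value interp x) ->
     ~ interpolation_property interp cand) /\
  ((forall x : L, closed_value interp x) ->
     interpolation_property interp cand).
Proof.
split; first exact: no_interpolation_without_closed_values HL.
have [lattice [top _] _ _] := HL.
exact: interpolation_of_closed_values top lattice.
Qed.
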